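(* Let $S$ be a set, let $f:2^S\to 2^S$ be monotonic with respect to $\subseteq$, and let $X\subseteq S$. Then $X$ is supported for $f$ if and only if $X\subseteq f(X)$.
   Context: For a binary relation ${\prec}$ on $X$ and $x\in X$, $\prec^{-1}(x)=\{x'\in X\mid x'\prec x\}$. A pair $(X,\prec)$ is a support ordering for $f$ if $X\subseteq S$, ${\prec}\subseteq X\times X$, and $x\in f(\prec^{-1}(x))$ for every $x\in X$. A set $X\subseteq S$ is supported for $f$ if there is some relation ${\prec}\subseteq X\times X$ such that $(X,\prec)$ is a support ordering for $f$. *)

Set Implicit Arguments.

Definition subset {S : Type} (A B : S -> Prop) : Prop := forall x, A x -> B x.

Definition monotonic {S : Type} (f : (S -> Prop) -> (S -> Prop)) : Prop :=
  forall A B, subset A B -> subset (f A) (f B).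

Definition preimage_rel {S : Type} (prec : S -> S -> Prop) (x : S) : S -> Prop :=
  fun x' => prec x' x.

Definition support_ordering {S : Type} (f : (S -> Prop) -> (S -> Prop))
  (X : S -> Prop) (prec : S -> S -> Prop) : Prop :=
  (forall x y, prec x y -> X x /\ X y) /\
  (forall x, X x -> f (preimage_rel prec x) x).

Definition supported {S : Type} (f : (S -> Prop) -> (S -> Prop)) (X : S -> Prop) : Prop :=
  exists prec : S -> S -> Prop, support_ordering f X prec.

(* Every predecessor set of a support ordering on X lies inside X, so
   monotonicity turns x ∈ f(≺⁻¹(x)) into x ∈ f(X).  Conversely, if X ⊆ f(X),
   the complete relation X × X is a support ordering, since then every
   predecessor set of a point of X is X itself. *)

Definition full_rel {S : Type} (X : S -> Prop) : S -> S -> Prop :=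
  fun x y => X x /\ X y.

Lemma preimage_rel_subset {S : Type} {X : S -> Prop} {prec : S -> S -> Prop} (x : S) :
  (forall y z, prec y z -> X y /\ X z) -> subset (preimage_rel prec x) X.
Proof. intros Hdom y Hy. exact (proj1 (Hdom y x Hy)). Qed.

Lemma preimage_full_rel {S : Type} {X : S -> Prop} {x : S} :
  X x -> subset X (preimage_rel (full_rel X) x).
Proof. intros Hx y Hy. split; assumption. Qed.

Lemma support_ordering_subset_image {S : Type} {f : (S -> Prop) -> (S -> Prop)}
  {X : S -> Prop} {prec : S -> S -> Prop} :
  monotonic f -> support_ordering f X prec -> subset X (f X).
Proof.
  intros Hmono [Hdom Hsupp] x Hx.
  exact (Hmono _ _ (preimage_rel_subset x Hdom) x (Hsupp x Hx)).
Qed.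

Lemma support_ordering_full_rel {S : Type} {f : (S -> Prop) -> (S -> Prop)}
  {X : S -> Prop} :
  monotonic f -> subset X (f X) -> support_ordering f X (full_rel X).
Proof.
  intros Hmono HXf. split.
  - intros x y Hxy. exact Hxy.
  - intros x Hx. exact (Hmono _ _ (preimage_full_rel Hx) x (HXf x Hx)).
Qed.

Theorem theorem2 (S : Type) (f : (S -> Prop) -> (S -> Prop)) (X : S -> Prop) :
  monotonic f -> (supported f X <-> subset X (f X)).
Proof.
  intros Hmono. split.
  - intros [prec Hprec]. exact (support_ordering_subset_image Hmono Hprec).
  - intros HXf. exists (full_rel X). exact (support_ordering_full_rel Hmono HXf).
Qed.
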